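(* $C(X)_\mathcal{P}$ is a clean ring if and only if it is an almost clean ring.
   Context: Let $(X,\tau)$ be a $T_1$ topological space and $\mathcal{P}$ an ideal of closed subsets of $X$ (a nonempty family of closed sets closed under finite unions and under taking closed subsets). For $f\colon X\to\mathbb{R}$, $D_f$ denotes the set of points of discontinuity of $f$, and $C(X)_\mathcal{P}=\{f\colon X\to\mathbb{R} : \overline{D_f}\in\mathcal{P}\}$, a commutative ring with unity under pointwise operations. A ring is clean if every element is the sum of a unit and an idempotent, and almost clean if every element is the sum of a regular element (a non-zero-divisor) and an idempotent. *)

From HB Require Import structures.
From mathcomp Require Import all_boot all_order all_algebra.
From mathcomp Require Import all_classical all_reals all_analysis.
From mathcomp Require Import Rstruct Rstruct_topology.
From Stdlib Require Import Reals.
Set Implicit Arguments. Unset Strict Implicit. Unset Printing Implicit Defensive.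
Import Order.TTheory GRing.Theory Num.Theory.
Local Open Scope classical_set_scope.
Local Open Scope ring_scope.

Definition closed_ideal {X : topologicalType} (P : set (set X)) : Prop :=
  [/\ P !=set0,
      (forall A, P A -> closed A),
      (forall A B, P A -> P B -> P (A `|` B)) &
      (forall A B, P A -> closed B -> B `<=` A -> P B)].

Definition discont {X : topologicalType} (f : X -> Rdefinitions.R) : set X :=
  [set x | ~ {for x, continuous f}].

Definition CP {X : topologicalType} (P : set (set X)) (f : X -> Rdefinitions.R) : Prop :=
  P (closure (discont f)).

Definition CP_unit {X : topologicalType} (P : set (set X)) (u : X -> Rdefinitions.R) : Prop :=
  CP P u /\ exists v, CP P v /\ forall x, u x * v x = 1.

Definition CP_idempotent {X : topologicalType} (P : set (set X)) (e : X -> Rdefinitions.R) : Prop :=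
  CP P e /\ forall x, e x * e x = e x.

Definition CP_regular {X : topologicalType} (P : set (set X)) (r : X -> Rdefinitions.R) : Prop :=
  CP P r /\ forall g, CP P g -> (forall x, r x * g x = 0) -> forall x, g x = 0.

Definition CP_clean {X : topologicalType} (P : set (set X)) : Prop :=
  forall f, CP P f -> exists u e, CP_unit P u /\ CP_idempotent P e /\
    forall x, f x = u x + e x.

Definition CP_almost_clean {X : topologicalType} (P : set (set X)) : Prop :=
  forall f, CP P f -> exists r e, CP_regular P r /\ CP_idempotent P e /\
    forall x, f x = r x + e x.

From mathcomp Require Import all_boot all_order all_algebra.
From mathcomp Require Import all_classical all_reals all_analysis.
From mathcomp Require Import Rstruct Rstruct_topology.
From mathcomp Require Import ring lra.

Set Implicit Arguments.
Unset Strict Implicit.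
Unset Printing Implicit Defensive.
Import Order.TTheory GRing.Theory Num.Theory numFieldNormedType.Exports.
Local Open Scope classical_set_scope.
Local Open Scope ring_scope.

(* C(X)_P is closed under sums, products, composition with continuous maps and
   inverses of nowhere-vanishing elements, because each of these operations
   only creates discontinuities where an operand is discontinuous.
   A unit is always regular, so clean implies almost clean.  Conversely, given
   f, apply almost cleanness to g := ramp o f, where ramp is 0 below 1/3 and 1
   above 2/3: g = r + e with r regular and e idempotent.  Any k with g k = 0
   then satisfies r k (1 - e) = 0, hence k (1 - e) = 0; taking for k the
   positive part of 1 - 3f shows f >= 1/3 where e = 0, and symmetrically
   f <= 2/3 where e = 1.  So f - e vanishes nowhere and f = (f - e) + e is a
   clean decomposition. *)

Local Notation RR := Rdefinitions.R.

Section ContinuousAt.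
Variables (R : realFieldType) (T : topologicalType).
Implicit Types (f g : T -> R) (x : T).

Lemma continuous_at_id (x : R) : {for x, continuous (fun y : R => y)}.
Proof. exact: cvg_id. Qed.

Lemma continuous_at_cst (c : R) x : {for x, continuous (fun _ : T => c)}.
Proof. exact: cst_continuous. Qed.

Lemma continuous_at_add f g x :
  {for x, continuous f} -> {for x, continuous g} ->
  {for x, continuous (fun y => f y + g y)}.
Proof. exact: (@continuousD _ R^o). Qed.

Lemma continuous_at_opp f x : {for x, continuous f} ->
  {for x, continuous (fun y => - f y)}.
Proof. exact: (@continuousN _ R^o). Qed.

Lemma continuous_at_mul f g x :
  {for x, continuous f} -> {for x, continuous g} ->
  {for x, continuous (fun y => f y * g y)}.
Proof. exact: continuousM. Qed.

Lemma continuous_at_norm f x : {for x, continuous f} ->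
  {for x, continuous (fun y => `|f y|)}.
Proof.
by move=> fx; apply: continuous_comp fx _; exact: (@norm_continuous _ R^o).
Qed.

Lemma continuous_at_inv f x : f x != 0 -> {for x, continuous f} ->
  {for x, continuous (fun y => (f y)^-1)}.
Proof. exact: continuousV. Qed.

End ContinuousAt.

Ltac solve_continuous_at :=
  repeat first [ apply: continuous_at_mul | apply: continuous_at_add
               | apply: continuous_at_opp | apply: continuous_at_norm
               | apply: continuous_at_cst | apply: continuous_at_id
               | assumption ].

(* [ramp] is 0 on [t <= 1/3] and 1 on [t >= 2/3]; [below_third] and
   [above_two_thirds] are twice the positive parts of [1 - 3t] and [3t - 2]. *)
Definition ramp (R : realFieldType) (t : R) :=
  (`|3 * t - 1| - `|3 * t - 2| + 1) / 2.
Definition below_third (R : realFieldType) (t : R) := (1 - 3 * t) + `|1 - 3 * t|.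
Definition above_two_thirds (R : realFieldType) (t : R) :=
  (3 * t - 2) + `|3 * t - 2|.

Lemma continuous_ramp (R : realFieldType) (t : R) :
  {for t, continuous (@ramp R)}.
Proof. by rewrite /ramp; solve_continuous_at. Qed.

Lemma continuous_below_third (R : realFieldType) (t : R) :
  {for t, continuous (@below_third R)}.
Proof. by rewrite /below_third; solve_continuous_at. Qed.

Lemma continuous_above_two_thirds (R : realFieldType) (t : R) :
  {for t, continuous (@above_two_thirds R)}.
Proof. by rewrite /above_two_thirds; solve_continuous_at. Qed.

Lemma ramp_mul_below_third (R : realFieldType) (t : R) : ramp t * below_third t = 0.
Proof.
rewrite /ramp /below_third; have /orP[t_ge|t_le] := le_total 1 (3 * t).
  by rewrite [`|1 - 3 * t|]ler0_norm; lra.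
by rewrite [`|3 * t - 1|]ler0_norm ?[`|3 * t - 2|]ler0_norm; lra.
Qed.

Lemma ramp_sub1_mul_above_two_thirds (R : realFieldType) (t : R) :
  (ramp t - 1) * above_two_thirds t = 0.
Proof.
rewrite /ramp /above_two_thirds; have /orP[t_ge|t_le] := le_total 2 (3 * t).
  by rewrite [`|3 * t - 1|]ger0_norm ?[`|3 * t - 2|]ger0_norm; lra.
by rewrite [`|3 * t - 2|]ler0_norm; lra.
Qed.

Lemma below_third_eq0 (R : realFieldType) (t : R) :
  below_third t = 0 -> 1 <= 3 * t.
Proof.
rewrite /below_third; have /orP[t_le|t_ge] := le_total 0 (1 - 3 * t).
  by rewrite ger0_norm //; lra.
by rewrite ler0_norm //; lra.
Qed.

Lemma above_two_thirds_eq0 (R : realFieldType) (t : R) :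
  above_two_thirds t = 0 -> 3 * t <= 2.
Proof.
rewrite /above_two_thirds; have /orP[t_ge|t_le] := le_total 0 (3 * t - 2).
  by rewrite ger0_norm //; lra.
by rewrite ler0_norm //; lra.
Qed.

Lemma idempotent_eq0_or_eq1 (R : idomainType) (a : R) :
  a * a = a -> a = 0 \/ a = 1.
Proof.
move=> aa; have /eqP : a * (a - 1) = 0 by rewrite mulrBr mulr1 aa subrr.
by rewrite mulf_eq0 subr_eq0 => /orP[/eqP|/eqP]; [left|right].
Qed.

Section RingCP.
Variables (X : topologicalType) (P : set (set X)).
Hypothesis idealP : closed_ideal P.
Implicit Types f g h k : X -> RR.

Lemma CP_of_continuous_at f g h : CP P f -> CP P g ->
  (forall x, {for x, continuous f} -> {for x, continuous g} ->
     {for x, continuous h}) ->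
  CP P h.
Proof.
case: idealP => _ _ PU PS Pf Pg hcont.
apply: (PS _ _ (PU _ _ Pf Pg)); first exact: closed_closure.
rewrite -closureU; apply: closureS => x /= hx.
have [hfx|] := pselect {for x, continuous f}; last by left.
have [hgx|] := pselect {for x, continuous g}; last by right.
by exfalso; apply/hx/hcont.
Qed.

Lemma CP_add f g : CP P f -> CP P g -> CP P (fun x => f x + g x).
Proof.
by move=> Pf Pg; apply: (CP_of_continuous_at Pf Pg) => x; exact: continuous_at_add.
Qed.

Lemma CP_mul f g : CP P f -> CP P g -> CP P (fun x => f x * g x).
Proof.
by move=> Pf Pg; apply: (CP_of_continuous_at Pf Pg) => x; exact: continuous_at_mul.
Qed.

Lemma CP_comp (phi : RR -> RR) f : continuous phi -> CP P f -> CP P (phi \o f).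
Proof.
move=> phiC Pf; apply: (CP_of_continuous_at Pf Pf) => x fx _.
exact: continuous_comp fx (phiC _).
Qed.

Lemma CP_inv f : CP P f -> (forall x, f x != 0) -> CP P (fun x => (f x)^-1).
Proof.
move=> Pf f_neq0; apply: (CP_of_continuous_at Pf Pf) => x fx _.
exact: continuous_at_inv.
Qed.

Lemma CP_unit_regular u : CP_unit P u -> CP_regular P u.
Proof.
case=> Pu [v [_ uv1]]; split=> // g _ ug0 x.
by rewrite -[g x]mul1r -(uv1 x) mulrAC ug0 mul0r.
Qed.

Lemma CP_unit_nowhere0 f : CP P f -> (forall x, f x != 0) -> CP_unit P f.
Proof.
move=> Pf f_neq0; split => //.
by exists (fun x => (f x)^-1); split; [exact: CP_inv | move=> x; exact: mulfV].
Qed.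

(* As e (1 - e) = 0, the regular part r of g = r + e agrees with g on [e = 0]
   and with g - 1 on [e = 1], so annihilators of g (resp. g - 1) must vanish
   there. *)
Lemma annihilator_vanishes_off_idempotent g r e k :
  CP_regular P r -> CP_idempotent P e -> (forall x, g x = r x + e x) -> CP P k ->
  (forall x, g x * k x = 0) -> forall x, k x * (1 - e x) = 0.
Proof.
move=> r_reg [Pe ee] g_split Pk gk.
apply: (r_reg.2 (fun x => k x * (1 - e x))).
  apply: CP_mul => //; apply: (CP_comp (phi := fun t => 1 - t)) Pe => t.
  solve_continuous_at.
move=> x; have gk_x := gk x; rewrite g_split in gk_x.
have -> : r x * (k x * (1 - e x)) =
          (r x + e x) * k x * (1 - e x) + k x * (e x * e x - e x) by ring.
by rewrite gk_x ee subrr !mul0r mulr0 addr0.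
Qed.

Lemma annihilator_vanishes_on_idempotent g r e k :
  CP_regular P r -> CP_idempotent P e -> (forall x, g x = r x + e x) -> CP P k ->
  (forall x, (g x - 1) * k x = 0) -> forall x, k x * e x = 0.
Proof.
move=> r_reg [Pe ee] g_split Pk gk.
apply: (r_reg.2 (fun x => k x * e x)); first exact: CP_mul.
move=> x; have gk_x := gk x; rewrite g_split in gk_x.
have -> : r x * (k x * e x) =
          (r x + e x - 1) * k x * e x - k x * (e x * e x - e x) by ring.
by rewrite gk_x ee subrr !mul0r mulr0 subr0.
Qed.

Lemma almost_clean_sub_idempotent_nowhere0 f : CP_almost_clean P -> CP P f ->
  exists e, CP_idempotent P e /\ forall x, f x - e x != 0.
Proof.
move=> acP Pf.
have [r [e [r_reg [e_idem g_split]]]] := acP _ (CP_comp (@continuous_ramp RR) Pf).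
have f_ge := annihilator_vanishes_off_idempotent r_reg e_idem g_split
  (CP_comp (@continuous_below_third RR) Pf)
  (fun x => ramp_mul_below_third (f x)).
have f_le := annihilator_vanishes_on_idempotent r_reg e_idem g_split
  (CP_comp (@continuous_above_two_thirds RR) Pf)
  (fun x => ramp_sub1_mul_above_two_thirds (f x)).
exists e; split=> // x; apply/eqP.
have [ex0|ex1] := idempotent_eq0_or_eq1 (e_idem.2 x).
  have /below_third_eq0 : below_third (f x) = 0.
    by have := f_ge x; rewrite /= ex0 subr0 mulr1.
  by rewrite ex0; lra.
have /above_two_thirds_eq0 : above_two_thirds (f x) = 0.
  by have := f_le x; rewrite /= ex1 mulr1.
by rewrite ex1; lra.
Qed.

End RingCP.

Theorem theorem3p12 (X : topologicalType) (P : set (set X)) :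
  accessible_space X -> closed_ideal P ->
  (CP_clean P <-> CP_almost_clean P).
Proof.
move=> _ idealP; split=> [cleanP f Pf | acP f Pf].
  have [u [e [u_unit [e_idem f_split]]]] := cleanP f Pf.
  by exists u, e; split=> //; exact: CP_unit_regular.
have [e [e_idem fe_neq0]] := almost_clean_sub_idempotent_nowhere0 idealP acP Pf.
exists (fun x => f x - e x), e; split; last by split=> // x; rewrite subrK.
apply: CP_unit_nowhere0 => //; apply: CP_add => //.
by apply: (CP_comp idealP (phi := fun t => - t)) e_idem.1 => t; solve_continuous_at.
Qed.
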